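(* Let $m,p,n$ be positive integers with $p\mid m$, $n>1$. (i) For $\lambda>1$, $\mathbf M_{\boldsymbol\theta}=(M_{\theta_1},\ldots,M_{\theta_n})$ is a $\boldsymbol\Theta_n$-contraction on $L^2(\mathbb D^n,dV^{(\lambda)})$. (ii) For $\lambda\ge1$, the restriction of $\mathbf M_{\boldsymbol\theta}$ to $\mathbb A^{(\lambda)}(\mathbb D^n)$ is a $\boldsymbol\Theta_n$-contraction.
   Context: $\theta_i(z)=s_i(z_1^m,\ldots,z_n^m)$ for $1\le i\le n-1$ ($s_i$ elementary symmetric), $\theta_n(z)=(z_1\cdots z_n)^{m/p}$; a $\boldsymbol\Theta_n$-contraction is a commuting tuple $T$ with $\|f(T)\|\le\sup_{\boldsymbol\theta(\overline{\mathbb D}^n)}|f|$ for all polynomials $f$. For $\lambda>1$, $dV^{(\lambda)}=\big(\frac{\lambda-1}{\pi}\big)^n\prod_{i=1}^n(1-|z_i|^2)^{\lambda-2}dV$ ($dV$ Lebesgue measure on $\mathbb D^n$) and $\mathbb A^{(\lambda)}(\mathbb D^n)$ is the space of holomorphic functions in $L^2(\mathbb D^n,dV^{(\lambda)})$, with reproducing kernel $\prod_{i=1}^n(1-z_i\bar w_i)^{-\lambda}$; $\mathbb A^{(1)}(\mathbb D^n)$ denotes the Hardy space $H^2(\mathbb D^n)$ with kernel $\prod_i(1-z_i\bar w_i)^{-1}$. $M_{\theta_i}$ is multiplication by $\theta_i$. *)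

From HB Require Import structures.
From mathcomp Require Import all_boot all_order all_algebra.
From mathcomp Require Import complex.
From mathcomp Require mpoly.
From mathcomp Require Import all_classical all_reals all_analysis.
Set Implicit Arguments. Unset Strict Implicit. Unset Printing Implicit Defensive.
Import Order.TTheory GRing.Theory Num.Theory.
Local Open Scope ring_scope.
Local Open Scope classical_set_scope.

Definition toC (R : realType) (x : R * R) : R[i] := Complex x.1 x.2.

Definition cabs (R : realType) (z : R[i]) : R := Normc.normc z.

Definition in_polydisc (R : realType) (n : nat) (z : n.-tuple R[i]) : bool :=
  [forall i, cabs (tnth z i) < 1].
Definition in_cpolydisc (R : realType) (n : nat) (z : n.-tuple R[i]) : bool :=
  [forall i, cabs (tnth z i) <= 1].

Definition esym_eval (R : realType) (n k : nat) (w : 'I_n -> R[i]) : R[i] :=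
  \sum_(S : {set 'I_n} | #|S| == k) \prod_(j in S) w j.

(* theta = (theta_1, ..., theta_n); coordinate i : 'I_n is theta_{i+1}:
   theta_{i+1}(z) = s_{i+1}(z_1^m,...,z_n^m) for i+1 <= n-1,
   theta_n(z) = (z_1 ... z_n)^(m/p). *)
Definition theta (R : realType) (m p n : nat) (z : n.-tuple R[i]) : 'I_n -> R[i] :=
  fun i => if (i.+1 < n)%N then esym_eval i.+1 (fun j => tnth z j ^+ m)
           else (\prod_(j < n) tnth z j) ^+ (m %/ p).

Definition Theta_set (R : realType) (m p n : nat) : set ('I_n -> R[i]) :=
  @theta R m p n @` [set z : n.-tuple R[i] | in_cpolydisc z].

Definition sup_Theta (R : realType) (m p n : nat) (f : mpoly.mpoly n R[i]) : R :=
  sup [set cabs (mpoly.meval v f) | v in @Theta_set R m p n].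

(* operators act on (representatives of) functions C^n -> C *)
Definition fn (R : realType) (n : nat) := n.-tuple R[i] -> R[i].

Definition op_monomial (R : realType) (n : nat) (T : 'I_n -> fn R n -> fn R n)
  (a : mpoly.multinom n) : fn R n -> fn R n :=
  \big[(fun F G => F \o G)/id]_(i < n) iter (mpoly.fun_of_multinom a i) (T i).

Definition op_peval (R : realType) (n : nat) (f : mpoly.mpoly n R[i])
  (T : 'I_n -> fn R n -> fn R n) : fn R n -> fn R n :=
  fun g z => \sum_(a <- mpoly.msupp f) mpoly.mcoeff a f * op_monomial T a g z.

(* Theta_n-contraction on a function space H (a set of representatives)
   whose squared norm is nrm2: T leaves H invariant, the T_i commute, and
   ||f(T)|| <= sup_{Theta_n} |f| for every polynomial f (stated with squared
   norms, i.e. ||f(T) g||^2 <= (sup|f|)^2 ||g||^2 for all g in H). *)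
Definition Theta_contraction (R : realType) (m p n : nat) (H : set (fn R n))
  (nrm2 : fn R n -> \bar R) (T : 'I_n -> fn R n -> fn R n) : Prop :=
  [/\ forall i g, H g -> H (T i g),
      forall i j g, H g -> T i (T j g) = T j (T i g) &
      forall (f : mpoly.mpoly n R[i]) g, H g ->
        (nrm2 (op_peval f T g) <= ((sup_Theta m p f) ^+ 2)%:E * nrm2 g)%E].

Definition Mtheta (R : realType) (m p n : nat) : 'I_n -> fn R n -> fn R n :=
  fun i g z => theta m p z i * g z.

(* integral over C^n = (R x R)^n with respect to Lebesgue measure,
   computed as an iterated integral (Tonelli) *)
Fixpoint cint (R : realType) (n : nat) : (n.-tuple R[i] -> \bar R) -> \bar R :=
  match n with
  | 0 => fun F => F [tuple]
  | n'.+1 => fun F =>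
      (\int[(@lebesgue_measure R \x @lebesgue_measure R)%E]_x
         @cint R n' (fun t => F (cons_tuple (toC x) t)))%E
  end.

(* density of dV^(lambda) with respect to Lebesgue measure dV on D^n *)
Definition weight (R : realType) (n : nat) (lam : R) (z : n.-tuple R[i]) : R :=
  ((lam - 1) / pi) ^+ n *
  \prod_(i < n) powR (1 - cabs (tnth z i) ^+ 2) (lam - 2).

Definition L2norm2 (R : realType) (n : nat) (lam : R) (g : fn R n) : \bar R :=
  @cint R n (fun z => if in_polydisc z then (weight lam z * cabs (g z) ^+ 2)%:E
                   else 0%E).

Definition measurable_on_polydisc (R : realType) (n : nat) (g : fn R n) : Prop :=
  let D := [set x : n.-tuple (R * R) | in_polydisc (map_tuple (@toC R) x)] in
  measurable_fun D (fun x => complex.Re (g (map_tuple (@toC R) x))) /\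
  measurable_fun D (fun x => complex.Im (g (map_tuple (@toC R) x))).

Definition L2 (R : realType) (n : nat) (lam : R) : set (fn R n) :=
  [set g | measurable_on_polydisc g /\ (L2norm2 lam g < +oo)%E].

Definition complex_differentiable_at (R : realType) (h : R[i] -> R[i]) (w : R[i]) :=
  exists l : R[i], forall e : R, 0 < e -> exists2 d : R, 0 < d &
    forall k : R[i], k != 0 -> cabs k < d -> cabs ((h (w + k) - h w) / k - l) < e.

Definition tuple_upd (R : realType) (n : nat) (z : n.-tuple R[i]) (i : 'I_n) (w : R[i]) :
  n.-tuple R[i] := [tuple if j == i then w else tnth z j | j < n].

(* holomorphic on D^n: holomorphic in each variable separately
   (equivalent to joint holomorphy by Hartogs' theorem) *)
Definition holomorphic_polydisc (R : realType) (n : nat) (g : fn R n) : Prop :=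
  forall z : n.-tuple R[i], in_polydisc z -> forall i : 'I_n,
    complex_differentiable_at (fun w => g (tuple_upd z i w)) (tnth z i).

Definition expi (R : realType) (t : R) : R[i] := Complex (cos t) (sin t).

(* integral over the torus T^n with normalized Haar measure *)
Fixpoint tint (R : realType) (n : nat) : (n.-tuple R[i] -> \bar R) -> \bar R :=
  match n with
  | 0 => fun F => F [tuple]
  | n'.+1 => fun F =>
      (\int[@lebesgue_measure R]_(t in `[0%R, (2 * pi)%R]%classic)
         (((2 * pi)^-1)%:E * @tint R n' (fun s => F (cons_tuple (expi t) s))))%E
  end.

Definition hardy_norm2 (R : realType) (n : nat) (g : fn R n) : \bar R :=
  ereal_sup [set @tint R n (fun zeta =>
      (cabs (g (map_tuple (fun w => Complex r 0 * w) zeta)) ^+ 2)%:E)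
    | r in `]0%R, 1%R[%classic].

(* A^(lambda)(D^n): Hardy space for lambda = 1, weighted Bergman space
   (holomorphic functions in L^2(dV^(lambda))) for lambda > 1 *)
Definition Aspace (R : realType) (n : nat) (lam : R) : set (fn R n) :=
  [set g | holomorphic_polydisc g /\
     (if lam == 1 then is_true (hardy_norm2 g < +oo)%E else L2 lam g)].

Definition Anorm2 (R : realType) (n : nat) (lam : R) (g : fn R n) : \bar R :=
  if lam == 1 then hardy_norm2 g else L2norm2 lam g.

From HB Require Import structures.
From mathcomp Require Import all_boot all_order all_algebra.
From mathcomp Require Import complex.
From mathcomp Require mpoly.
From mathcomp Require Import all_classical all_reals all_analysis.
From mathcomp Require Import measurable_realfun ring.
Set Implicit Arguments.
Unset Strict Implicit.
Unset Printing Implicit Defensive.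

Import Order.TTheory GRing.Theory Num.Theory.
Local Open Scope ring_scope.

(* Each M_{theta_i} is multiplication by theta_i, so f(M_theta) is multiplication
   by f o theta.  For z in the polydisc, theta(z) lies in Theta_n, hence
   |f(theta(z))| <= sup_{Theta_n} |f|; this pointwise bound integrates against
   the nonnegative weights defining the weighted Bergman and Hardy norms.  The
   spaces are invariant because multiplication by a polynomial in z preserves
   measurability and holomorphy, and the norm stays finite by the bound with
   f = X_i. *)

Section ComplexModulus.
Context {R : realType}.
Implicit Types x y z : R[i].

Lemma cabs_ge0 z : 0 <= cabs z.
Proof. by case: z => a b; exact: sqrtr_ge0. Qed.

Lemma cabs0 : cabs (0 : R[i]) = 0.
Proof. exact: Normc.normc0. Qed.

Lemma cabsD x y : cabs (x + y) <= cabs x + cabs y.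
Proof. exact: le_normcD. Qed.

Lemma cabsM x y : cabs (x * y) = cabs x * cabs y.
Proof. exact: Normc.normcM. Qed.

Lemma cabsX z k : cabs (z ^+ k) = cabs z ^+ k.
Proof.
elim: k => [|k IH]; first by rewrite !expr0; exact: Normc.normc1.
by rewrite !exprS cabsM IH.
Qed.

Lemma cabs_prod I (r : seq I) (P : pred I) (F : I -> R[i]) :
  cabs (\prod_(i <- r | P i) F i) = \prod_(i <- r | P i) cabs (F i).
Proof. by apply: big_morph; [exact: cabsM | exact: Normc.normc1]. Qed.

Lemma cabs_sum I (r : seq I) (P : pred I) (F : I -> R[i]) :
  cabs (\sum_(i <- r | P i) F i) <= \sum_(i <- r | P i) cabs (F i).
Proof.
elim/big_rec2: _ => [|i y x _ le_xy]; first by rewrite cabs0.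
exact: le_trans (cabsD _ _) (lerD _ le_xy).
Qed.

End ComplexModulus.

Section ThetaBounds.
Context {R : realType} (m p n : nat).

Lemma cabs_esym_eval_le k (w : 'I_n -> R[i]) :
  (forall j, cabs (w j) <= 1) -> cabs (esym_eval k w) <= 2 ^+ n.
Proof.
move=> w_le1; apply: le_trans (cabs_sum _ _ _) _.
have -> : 2 ^+ n = \sum_(S : {set 'I_n}) 1 :> R.
  by rewrite sumr_const -cardsT -powersetT card_powerset cardsT card_ord natrX.
rewrite [leRHS](bigID (fun S : {set 'I_n} => #|S| == k)) /=.
apply: ler_wpDr; first exact: sumr_ge0.
apply: ler_sum => S _; rewrite cabs_prod; apply: prodr_ile1 => j _.
by rewrite cabs_ge0 w_le1.
Qed.

Lemma cabs_theta_le (z : n.-tuple R[i]) i :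
  in_cpolydisc z -> cabs (theta m p z i) <= 2 ^+ n.
Proof.
move=> /forallP z_le1; rewrite /theta; case: ifP => _.
  by apply: cabs_esym_eval_le => j; rewrite cabsX exprn_ile1 ?cabs_ge0.
rewrite cabsX cabs_prod; apply: le_trans (exprn_ege1 _ _); last by rewrite ler1n.
apply: exprn_ile1; first by apply: prodr_ge0 => j _; exact: cabs_ge0.
by apply: prodr_ile1 => j _; rewrite cabs_ge0 z_le1.
Qed.

Lemma cabs_meval_le (f : mpoly.mpoly n R[i]) (v : 'I_n -> R[i]) (B : R) :
  (forall i, cabs (v i) <= B) ->
  cabs (mpoly.meval v f) <=
    \sum_(a <- mpoly.msupp f)
      cabs (mpoly.mcoeff a f) * \prod_(i < n) B ^+ mpoly.fun_of_multinom a i.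
Proof.
move=> v_leB; rewrite mpoly.mevalE; apply: le_trans (cabs_sum _ _ _) _.
apply: ler_sum => a _; rewrite cabsM ler_wpM2l ?cabs_ge0 // cabs_prod.
apply: ler_prod => i _; rewrite cabsX exprn_ge0 ?cabs_ge0 //=.
by rewrite lerXn2r ?nnegrE ?cabs_ge0 // (le_trans (cabs_ge0 _) (v_leB i)).
Qed.

Lemma sup_Theta_ub (f : mpoly.mpoly n R[i]) (z : n.-tuple R[i]) :
  in_cpolydisc z -> cabs (mpoly.meval (theta m p z) f) <= sup_Theta m p f.
Proof.
move=> zD; apply: ub_le_sup; last by exists (theta m p z) => //; exists z.
eexists => _ [_ [w wD <-] <-].
by apply: cabs_meval_le => i; exact: cabs_theta_le.
Qed.

Lemma sup_Theta_ge0 (f : mpoly.mpoly n R[i]) : 0 <= sup_Theta m p f.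
Proof.
have zeroD : in_cpolydisc [tuple (0 : R[i]) | _ < n].
  by apply/forallP => i; rewrite tnth_mktuple cabs0.
exact: le_trans (cabs_ge0 _) (sup_Theta_ub f zeroD).
Qed.

End ThetaBounds.

Section MultiplicationTuple.
Context {R : realType} (m p n : nat).
Local Notation M := (@Mtheta R m p n).

Lemma iter_Mtheta k i (g : fn R n) z : iter k (M i) g z = theta m p z i ^+ k * g z.
Proof.
elim: k g => [|k IH] g /=; first by rewrite mul1r.
by rewrite /Mtheta IH exprS mulrA.
Qed.

Lemma op_monomial_Mtheta (a : mpoly.multinom n) (g : fn R n) z :
  op_monomial M a g z =
    (\prod_(i < n) theta m p z i ^+ mpoly.fun_of_multinom a i) * g z.
Proof.
rewrite /op_monomial; elim: (index_enum _) g => [|i r IH] g.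
  by rewrite !big_nil mul1r.
by rewrite !big_cons /= iter_Mtheta IH mulrA.
Qed.

Lemma op_peval_Mtheta (f : mpoly.mpoly n R[i]) (g : fn R n) z :
  op_peval f M g z = mpoly.meval (theta m p z) f * g z.
Proof.
rewrite /op_peval mpoly.mevalE big_distrl /=.
by apply: eq_bigr => a _; rewrite op_monomial_Mtheta mulrA.
Qed.

Lemma Mtheta_op_pevalX i (g : fn R n) :
  M i g = op_peval (mpoly.mpolyX _ (mpoly.mnm1 i)) M g.
Proof. by apply/funext => z; rewrite op_peval_Mtheta mpoly.mevalXU. Qed.

Lemma Mtheta_comm i j (g : fn R n) : M i (M j g) = M j (M i g).
Proof. by apply/funext => z; rewrite /Mtheta mulrCA. Qed.

Lemma op_peval_Mtheta_le (f : mpoly.mpoly n R[i]) (g : fn R n) z :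
  in_cpolydisc z ->
  cabs (op_peval f M g z) ^+ 2 <= sup_Theta m p f ^+ 2 * cabs (g z) ^+ 2.
Proof.
move=> zD; rewrite op_peval_Mtheta cabsM exprMn ler_wpM2r ?exprn_ge0 ?cabs_ge0 //.
by rewrite lerXn2r ?nnegrE ?cabs_ge0 ?sup_Theta_ge0 ?sup_Theta_ub.
Qed.

End MultiplicationTuple.

Section NonnegIntegral.
Local Open Scope ereal_scope.
Import HBNNSimple.

(* No measurability is needed: for nonnegative functions the integral is the
   supremum of the integrals of the simple functions below them. *)
Lemma ge0_integral_le_scale d (T : measurableType d) (R : realType)
    (mu : {measure set T -> \bar R}) (D : set T) (f1 f2 : T -> \bar R) (k : R) :
  (0 <= k)%R -> (forall x, D x -> 0 <= f1 x) -> (forall x, D x -> 0 <= f2 x) ->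
  (forall x, D x -> f1 x <= k%:E * f2 x) ->
  \int[mu]_(x in D) f1 x <= k%:E * \int[mu]_(x in D) f2 x.
Proof.
move=> k0 f10 f20 f12.
rewrite (ge0_integralE _ f10) (ge0_integralE _ f20).
apply: ge_ereal_sup => _ [h /= h_le <-].
have hk x : (h x)%:E <= k%:E * (f2 \_ D) x.
  apply: le_trans (h_le x) _; rewrite /patch; case: ifP => [/[1!inE]|_].
    exact: f12.
  by rewrite mule0.
have [k_eq0|k_neq0] := eqVneq k 0%R.
  subst k; suff -> : h = cst 0%R :> (T -> R) by rewrite sintegral0 mul0e.
  apply/funext => x; apply/eqP; rewrite eq_le fun_ge0 andbT -lee_fin.
  by have := hk x; rewrite mul0e.
have kV0 : (0 <= k^-1)%R by rewrite invr_ge0.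
pose hk' := scale_nnsfun h kV0.
have -> : sintegral mu h = sintegral mu (cst k \* hk')%R.
  by apply: eq_sintegral => x /=; rewrite mulrA divff ?mul1r.
rewrite sintegralrM lee_wpmul2l ?lee_fin //.
apply: ereal_sup_ubound; exists hk' => // x /=.
have k_gt0 : (0 < k)%R by rewrite lt_def k_neq0.
by rewrite EFinM -(@lee_pmul2l _ k%:E) ?lte_fin // muleA -EFinM divff // mul1r.
Qed.

End NonnegIntegral.

Definition in_torus {R : realType} {n : nat} (z : n.-tuple R[i]) : bool :=
  [forall i, cabs (tnth z i) == 1].

Section Norms.
Context {R : realType}.
Local Open Scope ereal_scope.

Lemma in_polydisc_cpolydisc n (z : n.-tuple R[i]) : in_polydisc z -> in_cpolydisc z.
Proof. by move=> /forallP zD; apply/forallP => i; exact/ltW/zD. Qed.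

Lemma in_torus_cons n (x : R[i]) (s : n.-tuple R[i]) :
  cabs x = 1%R -> in_torus s -> in_torus (cons_tuple x s).
Proof.
move=> x1 /forallP s1; apply/forallP => i.
have [j ->|->] := unliftP ord0 i.
  by have := tnthS x s j; rewrite /cons_tuple => ->; exact: s1.
by have := tnth0 x s; rewrite /cons_tuple => ->; rewrite x1.
Qed.

Lemma cabs_expi (t : R) : cabs (expi t) = 1%R.
Proof. by rewrite /cabs /expi /= cos2Dsin2 sqrtr1. Qed.

Lemma cint_ge0 n (F : n.-tuple R[i] -> \bar R) : (forall z, 0 <= F z) -> 0 <= cint F.
Proof.
elim: n F => [|n IH] F F0 /=; first exact: F0.
by apply: integral_ge0 => x _; apply: IH.
Qed.

Lemma cint_le_scale n (F1 F2 : n.-tuple R[i] -> \bar R) (k : R) : (0 <= k)%R ->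
  (forall z, 0 <= F1 z) -> (forall z, 0 <= F2 z) ->
  (forall z, F1 z <= k%:E * F2 z) -> cint F1 <= k%:E * cint F2.
Proof.
elim: n F1 F2 => [|n IH] F1 F2 k0 F10 F20 F12 /=; first exact: F12.
by apply: ge0_integral_le_scale => // x _; [apply: cint_ge0..|apply: IH].
Qed.

Lemma tint_ge0 n (F : n.-tuple R[i] -> \bar R) : (forall z, 0 <= F z) -> 0 <= tint F.
Proof.
elim: n F => [|n IH] F F0 /=; first exact: F0.
apply: integral_ge0 => x _; apply: mule_ge0; last exact: IH.
by rewrite lee_fin invr_ge0 mulr_ge0 ?pi_ge0.
Qed.

Lemma tint_le_scale n (F1 F2 : n.-tuple R[i] -> \bar R) (k : R) : (0 <= k)%R ->
  (forall z, 0 <= F1 z) -> (forall z, 0 <= F2 z) ->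
  (forall z, in_torus z -> F1 z <= k%:E * F2 z) -> tint F1 <= k%:E * tint F2.
Proof.
have c0 : 0 <= ((2 * pi)^-1)%:E :> \bar R by rewrite lee_fin invr_ge0 mulr_ge0 ?pi_ge0.
elim: n F1 F2 => [|n IH] F1 F2 k0 F10 F20 F12 /=.
  by apply: F12; apply/forallP => -[].
apply: ge0_integral_le_scale => // x _.
- by rewrite mule_ge0 ?tint_ge0.
- by rewrite mule_ge0 ?tint_ge0.
rewrite muleCA lee_wpmul2l // IH // => s s1.
by rewrite F12 // in_torus_cons ?cabs_expi.
Qed.

Lemma weight_ge0 n (lam : R) (z : n.-tuple R[i]) :
  (1 <= lam)%R -> (0 <= weight lam z)%R.
Proof.
move=> lam1; rewrite /weight mulr_ge0 ?exprn_ge0 ?divr_ge0 ?pi_ge0 ?subr_ge0 //.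
by apply: prodr_ge0 => i _; exact: powR_ge0.
Qed.

Lemma cabs_real (r : R) : cabs r%:C%C = `|r|%R.
Proof. by rewrite /cabs /= expr0n /= addr0 sqrtr_sqr. Qed.

Section ScaleBound.
Variables (n : nat) (k : R) (g1 g2 : fn R n).
Hypothesis k_ge0 : (0 <= k)%R.
Hypothesis g12 : forall z, in_polydisc z ->
  (cabs (g1 z) ^+ 2 <= k * cabs (g2 z) ^+ 2)%R.

Lemma L2norm2_le_scale (lam : R) : (1 <= lam)%R ->
  L2norm2 lam g1 <= k%:E * L2norm2 lam g2.
Proof.
move=> lam1; apply: cint_le_scale => // z; case: ifP => zD //.
- by rewrite lee_fin mulr_ge0 ?weight_ge0 ?exprn_ge0 ?cabs_ge0.
- by rewrite lee_fin mulr_ge0 ?weight_ge0 ?exprn_ge0 ?cabs_ge0.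
- by rewrite -EFinM lee_fin [leRHS]mulrCA ler_wpM2l ?weight_ge0 ?g12.
- by rewrite mule0.
Qed.

Lemma hardy_norm2_le_scale : hardy_norm2 g1 <= k%:E * hardy_norm2 g2.
Proof.
apply: ge_ereal_sup => _ [r /= r01 <-]; move: r01; rewrite in_itv /= => /andP[r0 r1].
pose F (g : fn R n) zeta :=
  (cabs (g (map_tuple (fun w => Complex r 0 * w) zeta)) ^+ 2)%:E.
apply: (@le_trans _ _ (k%:E * tint (F g2))).
  apply: tint_le_scale => // [z|z|z /forallP z1]; rewrite /F.
  - by rewrite lee_fin exprn_ge0 ?cabs_ge0.
  - by rewrite lee_fin exprn_ge0 ?cabs_ge0.
  rewrite -EFinM lee_fin g12 //; apply/forallP => j.
  by rewrite tnth_map cabsM cabs_real (eqP (z1 j)) mulr1 gtr0_norm.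
apply: lee_wpmul2l; first by rewrite lee_fin.
by apply: ereal_sup_ubound; exists r => //=; rewrite in_itv /= r0 r1.
Qed.

Lemma Anorm2_le_scale (lam : R) : (1 <= lam)%R ->
  Anorm2 lam g1 <= k%:E * Anorm2 lam g2.
Proof.
rewrite /Anorm2; case: ifP => _ lam1.
  exact: hardy_norm2_le_scale.
exact: L2norm2_le_scale.
Qed.

End ScaleBound.
End Norms.

Section FunctionSubring.
Context {R : realType} {T : Type} (P : (T -> R[i]) -> Prop).
Hypothesis P_cst : forall c, P (fun=> c).
Hypothesis PD : forall f g, P f -> P g -> P (f + g).
Hypothesis PM : forall f g, P f -> P g -> P (f * g).

Lemma fun_closed_sum I (r : seq I) (Q : pred I) (F : I -> T -> R[i]) :
  (forall i, P (F i)) -> P (fun x => \sum_(i <- r | Q i) F i x).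
Proof. by move=> PF; rewrite -fct_sumE; apply: (big_ind P) => //; exact: P_cst. Qed.

Lemma fun_closed_prod I (r : seq I) (Q : pred I) (F : I -> T -> R[i]) :
  (forall i, P (F i)) -> P (fun x => \prod_(i <- r | Q i) F i x).
Proof. by move=> PF; rewrite -fct_prodE; apply: (big_ind P) => //; exact: P_cst. Qed.

Lemma fun_closed_exp f k : P f -> P (fun x => f x ^+ k).
Proof.
move=> Pf; elim: k => [|k IH]; first exact: P_cst.
have -> : (fun x => f x ^+ k.+1) = f * (fun x => f x ^+ k).
  by apply/funext => x; rewrite exprS.
exact: PM.
Qed.

Lemma fun_closed_theta m p n (z : T -> n.-tuple R[i]) :
  (forall j, P (fun x => tnth (z x) j)) -> forall i, P (fun x => theta m p (z x) i).
Proof.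
move=> Pz i; rewrite /theta; case: (i.+1 < n)%N.
  by apply: fun_closed_sum => S; apply: fun_closed_prod => j; exact: fun_closed_exp.
by apply: fun_closed_exp; exact: fun_closed_prod.
Qed.

End FunctionSubring.

Section Measurability.
Context {R : realType} {n : nat}.
Local Notation X := (n.-tuple (R * R)).
Variable D : set X.

Definition cmeasurable (phi : X -> R[i]) :=
  measurable_fun D (fun x => complex.Re (phi x)) /\
  measurable_fun D (fun x => complex.Im (phi x)).

Lemma cmeasurable_cst c : cmeasurable (fun=> c).
Proof. by split; exact: measurable_cst. Qed.

Lemma cmeasurableD f g :
  cmeasurable f -> cmeasurable g -> cmeasurable (fun x => f x + g x).
Proof.
move=> [f1 f2] [g1 g2]; split.
  have -> : (fun x => complex.Re (f x + g x)) =
      (fun x => complex.Re (f x)) \+ (fun x => complex.Re (g x)).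
    by apply/funext => x /=; case: (f x) => ? ?; case: (g x).
  exact: measurable_funD.
have -> : (fun x => complex.Im (f x + g x)) =
    (fun x => complex.Im (f x)) \+ (fun x => complex.Im (g x)).
  by apply/funext => x /=; case: (f x) => ? ?; case: (g x).
exact: measurable_funD.
Qed.

Lemma cmeasurableM f g :
  cmeasurable f -> cmeasurable g -> cmeasurable (fun x => f x * g x).
Proof.
move=> [f1 f2] [g1 g2]; split.
  have -> : (fun x => complex.Re (f x * g x)) =
      (fun x => complex.Re (f x)) \* (fun x => complex.Re (g x)) \-
      (fun x => complex.Im (f x)) \* (fun x => complex.Im (g x)).
    by apply/funext => x /=; case: (f x) => ? ?; case: (g x).
  by apply: measurable_funB; exact: measurable_funM.
have -> : (fun x => complex.Im (f x * g x)) =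
    (fun x => complex.Re (f x)) \* (fun x => complex.Im (g x)) \+
    (fun x => complex.Im (f x)) \* (fun x => complex.Re (g x)).
  by apply/funext => x /=; case: (f x) => ? ?; case: (g x).
by apply: measurable_funD; exact: measurable_funM.
Qed.

Lemma cmeasurable_coord j : cmeasurable (fun x => tnth (map_tuple (@toC R) x) j).
Proof.
have mj := measurable_funS measurableT (@subsetT _ D) (measurable_tnth j).
split; under eq_fun do rewrite tnth_map.
  exact: measurableT_comp mj.
exact: measurableT_comp mj.
Qed.

End Measurability.

Lemma measurable_on_polydisc_Mtheta (R : realType) m p n i (g : fn R n) :
  measurable_on_polydisc g -> measurable_on_polydisc (@Mtheta R m p n i g).
Proof.
pose D := [set x : n.-tuple (R * R) | in_polydisc (map_tuple (@toC R) x)]%classic.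
have theta_meas := fun_closed_theta (cmeasurable_cst D) (@cmeasurableD _ _ D)
  (@cmeasurableM _ _ D) m p (cmeasurable_coord D).
by move=> g_meas; apply: cmeasurableM g_meas.
Qed.

Section Holomorphy.
Context {R : realType}.
Implicit Types (phi psi : R[i] -> R[i]) (f g h : R[i] -> R[i]) (w l : R[i]).

Definition vanishes_at0 phi := forall e : R, 0 < e ->
  exists2 d : R, 0 < d & forall k, k != 0 -> cabs k < d -> cabs (phi k) < e.

Definition bounded_near0 phi := exists M : R,
  exists2 d : R, 0 < d & forall k, k != 0 -> cabs k < d -> cabs (phi k) <= M.

Lemma vanishes_at0_eq phi psi :
  vanishes_at0 phi -> (forall k, k != 0 -> phi k = psi k) -> vanishes_at0 psi.
Proof.
move=> phi0 e_phi_psi e e_gt0; have [d d_gt0 phi_e] := phi0 e e_gt0.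
by exists d => // k k0 kd; rewrite -e_phi_psi ?phi_e.
Qed.

Lemma vanishes_at0_id : vanishes_at0 id.
Proof. by move=> e e_gt0; exists e. Qed.

Lemma vanishes_at0_0 : vanishes_at0 (fun=> 0).
Proof. by move=> e e_gt0; exists 1 => // k _ _; rewrite cabs0. Qed.

Lemma vanishes_at0_bounded phi : vanishes_at0 phi -> bounded_near0 phi.
Proof.
move=> phi0; have [d d_gt0 phi1] := phi0 1 ltr01.
by exists 1, d => // k k0 kd; exact/ltW/phi1.
Qed.

Lemma vanishes_at0D phi psi :
  vanishes_at0 phi -> vanishes_at0 psi -> vanishes_at0 (phi \+ psi).
Proof.
move=> phi0 psi0 e e_gt0; have e2_gt0 : 0 < e / 2 by rewrite divr_gt0.
have [d1 d1_gt0 phi_e] := phi0 _ e2_gt0; have [d2 d2_gt0 psi_e] := psi0 _ e2_gt0.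
exists (Num.min d1 d2) => [|k k0]; first by rewrite lt_min d1_gt0 d2_gt0.
rewrite lt_min => /andP[kd1 kd2]; apply: le_lt_trans (cabsD _ _) _.
by rewrite (splitr e) ltrD ?phi_e ?psi_e.
Qed.

Lemma vanishes_at0M phi psi :
  vanishes_at0 phi -> bounded_near0 psi -> vanishes_at0 (phi \* psi).
Proof.
move=> phi0 [M [d2 d2_gt0 psi_M]] e e_gt0.
have M1_gt0 : 0 < `|M| + 1 by rewrite ltr_wpDl.
have [d1 d1_gt0 phi_e] := phi0 _ (divr_gt0 e_gt0 M1_gt0).
exists (Num.min d1 d2) => [|k k0]; first by rewrite lt_min d1_gt0 d2_gt0.
rewrite lt_min => /andP[kd1 kd2]; rewrite cabsM.
apply: (@le_lt_trans _ _ (cabs (phi k) * (`|M| + 1))); last first.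
  by rewrite -ltr_pdivlMr ?phi_e.
rewrite ler_wpM2l ?cabs_ge0 //; apply: le_trans (psi_M k k0 kd2) _.
by rewrite (le_trans (ler_norm M)) ?lerDl.
Qed.

Lemma bounded_near0_cst c : bounded_near0 (fun=> c).
Proof. by exists (cabs c), 1. Qed.

Lemma bounded_near0D phi psi :
  bounded_near0 phi -> bounded_near0 psi -> bounded_near0 (phi \+ psi).
Proof.
move=> [M1 [d1 d1_gt0 phi_M]] [M2 [d2 d2_gt0 psi_M]].
exists (M1 + M2), (Num.min d1 d2) => [|k k0]; first by rewrite lt_min d1_gt0 d2_gt0.
rewrite lt_min => /andP[kd1 kd2]; apply: le_trans (cabsD _ _) _.
by rewrite lerD ?phi_M ?psi_M.
Qed.

Lemma bounded_near0M phi psi :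
  bounded_near0 phi -> bounded_near0 psi -> bounded_near0 (phi \* psi).
Proof.
move=> [M1 [d1 d1_gt0 phi_M]] [M2 [d2 d2_gt0 psi_M]].
exists (M1 * M2), (Num.min d1 d2) => [|k k0]; first by rewrite lt_min d1_gt0 d2_gt0.
rewrite lt_min => /andP[kd1 kd2] /=; rewrite cabsM.
by rewrite ler_pM ?cabs_ge0 ?phi_M ?psi_M.
Qed.

Definition dquot h w l k := (h (w + k) - h w) / k - l.

Lemma cdiffP h w :
  complex_differentiable_at h w <-> exists l, vanishes_at0 (dquot h w l).
Proof. by []. Qed.

Lemma cdiff_cst c w : complex_differentiable_at (fun=> c) w.
Proof.
by exists 0; apply: vanishes_at0_eq vanishes_at0_0 _ => k _; rewrite subrr mul0r subr0.
Qed.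

Lemma cdiff_id w : complex_differentiable_at id w.
Proof.
exists 1; apply: vanishes_at0_eq vanishes_at0_0 _ => k k0.
by rewrite addrAC subrr add0r divff // subrr.
Qed.

Lemma cdiffD f g w : complex_differentiable_at f w -> complex_differentiable_at g w ->
  complex_differentiable_at (fun x => f x + g x) w.
Proof.
move=> /cdiffP[l1 f'] /cdiffP[l2 g']; apply/cdiffP; exists (l1 + l2).
by apply: vanishes_at0_eq (vanishes_at0D f' g') _ => k _; rewrite /dquot /=; ring.
Qed.

Lemma cdiffM f g w : complex_differentiable_at f w -> complex_differentiable_at g w ->
  complex_differentiable_at (fun x => f x * g x) w.
Proof.
move=> /cdiffP[l1 f'] /cdiffP[l2 g']; apply/cdiffP; exists (l1 * g w + f w * l2).
have g'_bnd : bounded_near0 (dquot g w l2 \+ fun=> l2).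
  by apply: bounded_near0D (bounded_near0_cst _); exact: vanishes_at0_bounded.
have g_shift_bnd : bounded_near0 ((fun=> g w) \+ id \* (dquot g w l2 \+ fun=> l2)).
  apply: bounded_near0D (bounded_near0_cst _) _.
  exact: bounded_near0M (vanishes_at0_bounded vanishes_at0_id) g'_bnd.
(* With [d h l := dquot h w l], for [k != 0] we have
   [g (w + k) = g w + k * (d g l2 k + l2)] and
   [d (f * g) (l1 * g w + f w * l2) k
      = d f l1 k * g (w + k) + k * (d g l2 k + l2) * l1 + d g l2 k * f w]. *)
apply: vanishes_at0_eq (vanishes_at0D (vanishes_at0D (vanishes_at0M f' g_shift_bnd)
  (vanishes_at0M (vanishes_at0M vanishes_at0_id g'_bnd) (bounded_near0_cst l1)))
  (vanishes_at0M g' (bounded_near0_cst (f w)))) _ => k k0.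
by rewrite /dquot /=; field.
Qed.

End Holomorphy.

Lemma holomorphic_polydisc_Mtheta (R : realType) m p n i (g : fn R n) :
  holomorphic_polydisc g -> holomorphic_polydisc (@Mtheta R m p n i g).
Proof.
move=> g_holo z zD k; apply: (cdiffM _ (g_holo z zD k)).
have coord_cdiff j :
    complex_differentiable_at (fun w => tnth (tuple_upd z k w) j) (tnth z k).
  under eq_fun do rewrite tnth_mktuple.
  by case: eqP => _; [exact: cdiff_id | exact: cdiff_cst].
exact: (fun_closed_theta (P := fun h => complex_differentiable_at h (tnth z k))
  (cdiff_cst ^~ _) (fun f g => @cdiffD _ f g _) (fun f g => @cdiffM _ f g _)
  m p coord_cdiff i).
Qed.

Section Contraction.
Context {R : realType} (m p n : nat).
Local Notation M := (@Mtheta R m p n).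
Local Open Scope ereal_scope.

Lemma Theta_contraction_Mtheta (Q : set (fn R n)) (nrm2 : fn R n -> \bar R) :
  (forall i g, Q g -> Q (M i g)) ->
  (forall k g1 g2, (0 <= k)%R ->
    (forall z, in_polydisc z -> (cabs (g1 z) ^+ 2 <= k * cabs (g2 z) ^+ 2)%R) ->
    nrm2 g1 <= k%:E * nrm2 g2) ->
  Theta_contraction m p [set g | Q g /\ nrm2 g < +oo]%classic nrm2 M.
Proof.
move=> QM nrm2_le.
have peval_le f g : nrm2 (op_peval f M g) <= (sup_Theta m p f ^+ 2)%:E * nrm2 g.
  apply: nrm2_le => [|z zD]; first by rewrite exprn_ge0 ?sup_Theta_ge0.
  exact/op_peval_Mtheta_le/in_polydisc_cpolydisc.
split=> [i g [Qg g_fin]|i j g _|f g _]; last 2 first.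
- exact: Mtheta_comm.
- exact: peval_le.
split; first exact: QM.
rewrite Mtheta_op_pevalX; apply: le_lt_trans (peval_le _ _) _.
by rewrite lte_mul_pinfty ?lee_fin ?exprn_ge0 ?sup_Theta_ge0.
Qed.

End Contraction.

Lemma AspaceE (R : realType) n (lam : R) : Aspace lam =
  [set g : fn R n |
    (holomorphic_polydisc g /\ (lam != 1 -> measurable_on_polydisc g)) /\
    (Anorm2 lam g < +oo)%E]%classic.
Proof.
rewrite /Aspace /Anorm2; apply/seteqP; split=> g /=; case: eqP => _.
- by case=> g_holo g_fin.
- by case=> g_holo [g_meas g_fin]; split=> //; split.
- by case=> [[g_holo _] g_fin].
- by case=> [[g_holo /(_ isT) g_meas] g_fin].
Qed.

Theorem proposition4p11 (R : realType) (m p n : nat) :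
  (0 < m)%N -> (0 < p)%N -> (p %| m)%N -> (1 < n)%N ->
  (forall lam : R, 1 < lam ->
     Theta_contraction m p (@L2 R n lam) (@L2norm2 R n lam) (@Mtheta R m p n)) /\
  (forall lam : R, 1 <= lam ->
     Theta_contraction m p (@Aspace R n lam) (@Anorm2 R n lam) (@Mtheta R m p n)).
Proof.
move=> _ _ _ _; split=> lam lam1.
  apply: Theta_contraction_Mtheta => [i g|k g1 g2 k0 g12].
    exact: measurable_on_polydisc_Mtheta.
  exact: L2norm2_le_scale (ltW lam1).
rewrite AspaceE.
apply: Theta_contraction_Mtheta => [i g [g_holo g_meas]|k g1 g2 k0 g12].
  split=> [|/g_meas]; first exact: holomorphic_polydisc_Mtheta.
  exact: measurable_on_polydisc_Mtheta.
exact: Anorm2_le_scale.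
Qed.
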